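(* Let $\mathcal K=(\mathcal O,\mathcal B)$ be a $\mathcal{BALC}$ knowledge base, $C$ an $\mathcal{ALC}$ concept, $x$ an individual name, and $\kappa,\lambda$ contexts with $P_{\mathcal B}(\lambda)>0$. Then \[ P_{\mathcal K}(C(x)^\kappa\mid\lambda)=\frac{P_{\mathcal K}(C(x)^{\kappa\wedge\lambda})+P_{\mathcal B}(\lambda)-1}{P_{\mathcal B}(\lambda)}. \]
   Context: $V$ is a finite set of random variables, each with a finite value set; a world $\omega$ assigns a value to each variable. A Bayesian network $\mathcal B$ over $V$ defines $P_{\mathcal{B}}(\omega)=\prod_{X\in V}P(X=\omega(X)\mid \pi(X)=\omega(\pi(X)))$. A primitive context is a set of pairs $(X,x)$, $x$ a value of $X$; $\omega\models\kappa$ iff $\omega(X)=x$ for all $(X,x)\in\kappa$. A complex context is a finite nonempty set of primitive contexts, satisfied by $\omega$ iff $\omega$ satisfies one of them; $\phi\wedge\psi:=\{\kappa\cup\lambda\mid\kappa\in\phi,\lambda\in\psi\}$. $P_{\mathcal B}(\phi)=\sum_{\omega\models\phi}P_{\mathcal B}(\omega)$. $\mathcal O$ is a finite set of $\alpha^\kappa$ with $\alpha$ an $\mathcal{ALC}$ axiom (GCI, concept or role assertion). A $V$-interpretation $\mathcal{V}=(\Delta^{\mathcal V},\cdot^{\mathcal V},v^{\mathcal V})$ is an $\mathcal{ALC}$ interpretation plus a world; $\mathcal V\models\alpha^\phi$ iff $v^{\mathcal V}\not\models\phi$ or the $\mathcal{ALC}$ interpretation satisfies $\alpha$. A probabilistic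 interpretation $\mathcal P=(\mathcal J,P_{\mathcal J})$ is a finite set of $V$-interpretations with a distribution assigning each positive probability; it is a model of $\mathcal K$ iff every member satisfies all axioms of $\mathcal O$ and $\sum_{\mathcal V\in\mathcal J,\,v^{\mathcal V}=\omega}P_{\mathcal J}(\mathcal V)=P_{\mathcal B}(\omega)$ for every world $\omega$. $P_{\mathcal P}(C(x)^\phi)=\sum_{\mathcal V\in\mathcal J,\ \mathcal V\models C(x)^\phi}P_{\mathcal J}(\mathcal V)$, $P_{\mathcal K}(C(x)^\phi)=\inf_{\mathcal P\models\mathcal K}P_{\mathcal P}(C(x)^\phi)$; for $P_{\mathcal B}(\lambda)>0$, $P_{\mathcal P}(C(x)^\kappa\mid\lambda)=\frac{1}{P_{\mathcal B}(\lambda)}\sum_{\mathcal V\in\mathcal J,\ v^{\mathcal V}\models\lambda,\ \mathcal V\models C(x)^\kappa}P_{\mathcal J}(\mathcal V)$ and $P_{\mathcal K}(C(x)^\kappa\mid\lambda)=\inf_{\mathcal P\models\mathcal K}P_{\mathcal P}(C(x)^\kappa\mid\lambda)$. If $\mathcal K$ has no model, all these probabilities are defined to be $1$. *)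

From HB Require Import structures.
From mathcomp Require Import all_boot all_order all_algebra.
From mathcomp Require Import boolp classical_sets reals.
Set Implicit Arguments.
Unset Strict Implicit.
Unset Printing Implicit Defensive.
Import Order.TTheory GRing.Theory Num.Theory.
Local Open Scope ring_scope.

Section BALC.
Variable R : realType.
(* V : finite set of random variables; Val X : finite value set of X *)
Variable V : finType.
Variable Val : V -> finType.
Variables NC NR NI : Type.

Local Notation world := {dffun forall X : V, Val X}.

(* Bayesian network: a DAG (witnessed by a ranking compatible with the parent
   relation) with conditional probability tables depending only on parents *)
Record BN := {
  bn_par : V -> {set V};
  bn_rank : V -> nat;
  bn_acyclic : forall X Y, Y \in bn_par X -> (bn_rank Y < bn_rank X)%N;
  bn_cpt : forall X : V, world -> Val X -> R;
  bn_cpt_local : forall X (w w' : world),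
      (forall Y, Y \in bn_par X -> w Y = w' Y) -> @bn_cpt X w = @bn_cpt X w';
  bn_cpt_ge0 : forall X w x, 0 <= @bn_cpt X w x;
  bn_cpt_sum1 : forall X w, \sum_(x : Val X) @bn_cpt X w x = 1
}.

Definition PBw (B : BN) (w : world) : R := \prod_(X : V) @bn_cpt B X w (w X).

Definition pctx := {set {X : V & Val X}}.
Definition ctx := {set pctx}.

Definition sat_p (w : world) (k : pctx) : bool :=
  [forall p in k, w (tag p) == tagged p].
Definition sat_c (w : world) (phi : ctx) : bool := [exists k in phi, sat_p w k].

Definition ctx_and (phi psi : ctx) : ctx :=
  [set k :|: l | k in phi, l in psi].

Definition PBc (B : BN) (phi : ctx) : R := \sum_(w : world | sat_c w phi) PBw B w.

Inductive concept :=
| CName of NC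
| CTop
| CBot
| CNot of concept
| CAnd of concept & concept
| COr of concept & concept
| CEx of NR & concept
| CAll of NR & concept.

Inductive axiom :=
| GCI of concept & concept
| CAssert of concept & NI
| RAssert of NR & NI & NI.

Record VInterp := {
  vdom : Type;
  vdom_inh : vdom;
  vconc : NC -> vdom -> Prop;
  vrole : NR -> vdom -> vdom -> Prop;
  vind : NI -> vdom;
  vworld : world
}.
Arguments vdom_inh : clear implicits.
Arguments vconc : clear implicits.
Arguments vrole : clear implicits.
Arguments vind : clear implicits.
Arguments vworld : clear implicits.

Fixpoint cint (I : VInterp) (C : concept) : vdom I -> Prop :=
  match C with
  | CName A => vconc I A
  | CTop => fun _ => True
  | CBot => fun _ => False
  | CNot D => fun d => ~ @cint I D d
  | CAnd D E => fun d => @cint I D d /\ @cint I E d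
  | COr D E => fun d => @cint I D d \/ @cint I E d
  | CEx r D => fun d => exists e, vrole I r d e /\ @cint I D e
  | CAll r D => fun d => forall e, vrole I r d e -> @cint I D e
  end.
Arguments cint : clear implicits.

Definition sat_ax (I : VInterp) (a : axiom) : Prop :=
  match a with
  | GCI C D => forall d, cint I C d -> cint I D d
  | CAssert C x => cint I C (vind I x)
  | RAssert r x y => vrole I r (vind I x) (vind I y)
  end.

(* contextual axiom alpha^phi (phi complex; primitive kappa = singleton {kappa}) *)
Definition sat_cax (I : VInterp) (a : axiom) (phi : ctx) : Prop :=
  ~~ sat_c (vworld I) phi \/ sat_ax I a.

Definition ontology := seq (axiom * pctx).

Fixpoint inO (ak : axiom * pctx) (O : ontology) : Prop :=
  match O with
  | [::] => False
  | b :: O' => b = ak \/ inO ak O'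
  end.

Record PInterp := {
  pi_n : nat;
  pi_mem : 'I_pi_n -> VInterp;
  pi_pr : 'I_pi_n -> R;
  pi_pos : forall i, 0 < pi_pr i;
  pi_sum1 : \sum_i pi_pr i = 1
}.
Arguments pi_mem : clear implicits.
Arguments pi_pr : clear implicits.

Definition is_model (O : ontology) (B : BN) (P : PInterp) : Prop :=
  (forall i, forall ak, inO ak O -> sat_cax (pi_mem P i) ak.1 [set ak.2]) /\
  (forall w : world,
      \sum_(i | vworld (pi_mem P i) == w) pi_pr P i = PBw B w).

Definition has_model (O : ontology) (B : BN) : Prop := exists P, is_model O B P.

Definition probP (P : PInterp) (C : concept) (x : NI) (phi : ctx) : R :=
  \sum_(i | `[< sat_cax (pi_mem P i) (CAssert C x) phi >]) pi_pr P i.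

Definition probK (O : ontology) (B : BN) (C : concept) (x : NI) (phi : ctx) : R :=
  if `[< has_model O B >] then
    inf [set r | exists P, is_model O B P /\ r = probP P C x phi]
  else 1.

Definition probPcond (B : BN) (P : PInterp) (C : concept) (x : NI)
    (kappa lambda : ctx) : R :=
  (PBc B lambda)^-1 *
  \sum_(i | sat_c (vworld (pi_mem P i)) lambda &&
            `[< sat_cax (pi_mem P i) (CAssert C x) kappa >]) pi_pr P i.

Definition probKcond (O : ontology) (B : BN) (C : concept) (x : NI)
    (kappa lambda : ctx) : R :=
  if `[< has_model O B >] then
    inf [set r | exists P, is_model O B P /\ r = probPcond B P C x kappa lambda]
  else 1.

End BALC.

(* Conditioning on lambda only concerns the members of a model whose world
   satisfies lambda; these carry total mass P_B(lambda).  A member outside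
   lambda satisfies C(x)^(kappa /\ lambda) vacuously, and inside lambda the
   axioms C(x)^(kappa /\ lambda) and C(x)^kappa agree.  Hence in every model
   P(C(x)^(kappa /\ lambda)) = P_B(lambda) P(C(x)^kappa | lambda) + 1 - P_B(lambda),
   and taking infima commutes with this increasing affine map. *)

From HB Require Import structures.
From mathcomp Require Import all_boot all_order all_algebra.
From mathcomp Require Import boolp reals.
From mathcomp Require classical_sets.
From mathcomp Require Import ring.
Import Order.TTheory GRing.Theory Num.Theory.
Local Open Scope ring_scope.

Section InfImage.

(* Imported locally: classical_sets.set0 would shadow the finset set0 below. *)
Import classical_sets.
Local Open Scope classical_set_scope.

Variable R : realType.

Lemma inf_image_can (f g : R -> R) (S : set R) :
  {homo f : u v / u <= v} -> {homo g : u v / u <= v} ->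
  cancel f g -> cancel g f -> S !=set0 -> has_lbound S ->
  inf (f @` S) = f (inf S).
Proof.
move=> f_homo g_homo fK gK S_n0 lb_S; have [l lb_l] := lb_S.
have fS_n0 : f @` S !=set0 by case: S_n0 => s Ss; exists (f s), s.
have lb_fS : has_lbound (f @` S) by exists (f l) => _ [s Ss <-]; apply/f_homo/lb_l.
apply/le_anti/andP; split.
- rewrite -[inf (f @` S)]gK; apply: f_homo; apply: lb_le_inf => // s Ss.
  by rewrite -[s]fK; apply/g_homo/(ge_inf lb_fS); exists s.
- by apply: lb_le_inf => // _ [s Ss <-]; apply/f_homo/(ge_inf lb_S).
Qed.

End InfImage.

Section Semantics.

Import classical_sets.
Local Open Scope classical_set_scope.

Variables (R : realType) (V : finType) (Val : V -> finType) (NC NR NI : Type).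

Local Notation world := {dffun forall X : V, Val X}.

Lemma sat_pU (w : world) (k l : pctx Val) :
  sat_p w (k :|: l) = sat_p w k && sat_p w l.
Proof.
apply/forall_inP/andP => [sat_kl | [/forall_inP sat_k /forall_inP sat_l] p].
  by split; apply/forall_inP => p p_in; apply: sat_kl; rewrite inE p_in ?orbT.
by rewrite inE => /orP[/sat_k | /sat_l].
Qed.

Lemma sat_c_and (w : world) (phi psi : ctx Val) :
  sat_c w (ctx_and phi psi) = sat_c w phi && sat_c w psi.
Proof.
apply/exists_inP/andP => [[_ /imset2P[k l k_in l_in ->]] | ].
  rewrite sat_pU => /andP[sat_k sat_l].
  by split; apply/exists_inP; [exists k | exists l].
move=> [/exists_inP[k k_in sat_k] /exists_inP[l l_in sat_l]].
by exists (k :|: l); [apply/imset2P; exists k l | rewrite sat_pU sat_k].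
Qed.

Variables (O : ontology Val NC NR NI) (B : BN R Val).

Section Model.
Variable P : PInterp R Val NC NR NI.

Local Notation wP i := (vworld (pi_mem (p:=P) i)).

Lemma probPcond_ge0 (C : concept NC NR) (x : NI) (kappa lambda : ctx Val) :
  0 <= probPcond B P C x kappa lambda.
Proof.
apply: mulr_ge0; last by apply: sumr_ge0 => i _; apply/ltW/pi_pos.
by rewrite invr_ge0; apply: sumr_ge0 => w _; apply: prodr_ge0 => X _; apply: bn_cpt_ge0.
Qed.

Hypothesis P_model : is_model O B P.

Lemma model_mass_ctx (lambda : ctx Val) :
  \sum_(i | sat_c (wP i) lambda) pi_pr (p:=P) i = PBc B lambda.
Proof.
rewrite /PBc (partition_big (fun i => wP i) (fun w => sat_c w lambda)) //=.
apply: eq_bigr => w sat_w; rewrite -P_model.2; apply: eq_bigl => i.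
by case: eqP => [-> | _]; rewrite ?sat_w ?andbF.
Qed.

Lemma model_mass_not_ctx (lambda : ctx Val) :
  \sum_(i | ~~ sat_c (wP i) lambda) pi_pr (p:=P) i = 1 - PBc B lambda.
Proof.
rewrite -(pi_sum1 P) [in RHS](bigID (fun i => sat_c (wP i) lambda)) /=.
by rewrite model_mass_ctx [PBc B lambda + _]addrC addrK.
Qed.

Lemma probP_ctx_and (C : concept NC NR) (x : NI) (kappa lambda : ctx Val) :
  0 < PBc B lambda ->
  probP P C x (ctx_and kappa lambda) =
  PBc B lambda * probPcond B P C x kappa lambda + 1 - PBc B lambda.
Proof.
move=> lambda_pos; rewrite /probP (bigID (fun i => sat_c (wP i) lambda)) /=.
have in_lambda :
    \sum_(i | `[< sat_cax (pi_mem (p:=P) i) (CAssert C x) (ctx_and kappa lambda) >] &&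
              sat_c (wP i) lambda) pi_pr (p:=P) i =
    PBc B lambda * probPcond B P C x kappa lambda.
  rewrite /probPcond mulrA mulfV ?gt_eqF // mul1r; apply: eq_bigl => i.
  rewrite andbC; case: (boolP (sat_c _ lambda)) => //= sat_l.
  by apply/asboolP/asboolP; rewrite /sat_cax sat_c_and sat_l andbT.
have off_lambda :
    \sum_(i | `[< sat_cax (pi_mem (p:=P) i) (CAssert C x) (ctx_and kappa lambda) >] &&
              ~~ sat_c (wP i) lambda) pi_pr (p:=P) i = 1 - PBc B lambda.
  rewrite -model_mass_not_ctx; apply: eq_bigl => i.
  case: (boolP (sat_c _ lambda)) => [| unsat_l]; rewrite ?andbF ?andbT //.
  by apply/asboolP; left; rewrite sat_c_and (negbTE unsat_l) andbF.
by rewrite in_lambda off_lambda addrA.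
Qed.

End Model.

Lemma probK_ctx_and (C : concept NC NR) (x : NI) (kappa lambda : ctx Val) :
  0 < PBc B lambda ->
  probK O B C x (ctx_and kappa lambda) =
  PBc B lambda * probKcond O B C x kappa lambda + 1 - PBc B lambda.
Proof.
set c := PBc B lambda => c_pos; have c_neq0 : c != 0 by rewrite gt_eqF.
rewrite /probKcond /probK; case: asboolP => [[P0 P0_model] | _]; last first.
  by rewrite mulr1 addrAC subrr add0r.
pose g s := c * s + 1 - c; pose h r := (r - 1 + c) / c.
have g_homo : {homo g : u v / u <= v}.
  by move=> u v le_uv; rewrite /g !lerD2r; apply: ler_wpM2l => //; apply: ltW.
have h_homo : {homo h : u v / u <= v}.
  move=> u v le_uv; apply: ler_wpM2r; first by rewrite invr_ge0 ltW.
  by rewrite !lerD2r.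
have gK : cancel g h by move=> s; rewrite /g /h; field.
have hK : cancel h g by move=> r; rewrite /g /h; field.
set Scond := [set r | exists P, is_model O B P /\ r = probPcond B P C x kappa lambda].
have -> : [set r | exists P, is_model O B P /\ r = probP P C x (ctx_and kappa lambda)]
    = g @` Scond.
  apply/seteqP; split=> [r [P [P_model ->]] | _ [_ [P [P_model ->]] <-]].
    by exists (probPcond B P C x kappa lambda); [exists P | rewrite probP_ctx_and].
  by exists P; rewrite probP_ctx_and.
rewrite (@inf_image_can _ g h Scond g_homo h_homo gK hK) //.
- by exists (probPcond B P0 C x kappa lambda), P0.
- by exists 0 => _ [P [_ ->]]; apply: probPcond_ge0.
Qed.

End Semantics.

Theorem mainTheorem15 (R : realType) (V : finType) (Val : V -> finType)
    (NC NR NI : Type) (O : ontology Val NC NR NI) (B : BN R Val)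
    (C : concept NC NR) (x : NI) (kappa lambda : ctx Val) :
  kappa != set0 -> lambda != set0 ->
  0 < PBc B lambda ->
  probKcond O B C x kappa lambda =
  (probK O B C x (ctx_and kappa lambda) + PBc B lambda - 1) / PBc B lambda.
Proof.
move=> _ _ lambda_pos.
by rewrite probK_ctx_and //; field; rewrite gt_eqF.
Qed.
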